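(* Let $n>5f$ and consider an execution of the convergence algorithm described in the context, with at most $f$ Byzantine robots. Let $U(t)$ be the multiset of positions of the correct robots at time $t$. For every correct robot $i$ and every time $t$, $$range\big(trim^i_{2f}(P(t))\big) \subseteq range(U(t)),$$ where $range(S)=[\min S,\max S]$.
   Context: Setting: $n$ robots on the real line, of which at most $f$ are Byzantine (arbitrary positions) and $m\ge n-f$ are correct. Robots are anonymous, oblivious, have no common orientation, and have unlimited visibility with strong multiplicity detection. They operate in Look–Compute–Move cycles. Notation: $P(t)$ is the multiset of all $n$ positions at time $t$, sorted $P_1(t)\le\dots\le P_n(t)$. Let $x_i$ be the position of robot $i$. $trim^i_{2f}(P(t))$ is the multiset obtained from $P(t)$ by removing, among the $2f$ smallest positions, those strictly smaller than $x_i$, and, among the $2f$ largest positions, those strictly larger than $x_i$. Its minimum is $\min(x_i,P_{2f+1}(t))$ and its maximum is $\max(x_i,P_{n-2f}(t))$. The algorithm: robot $i$, after observing $P(t)$, is elected iff $x_i\le P_{f+1}(t)$ or $x_i\ge P_{n-f}(t)$. If elected, it moves toward the midpoint of $\min$ and $\max$ of $trim^i_{2f}(P(t))$; otherwise it does not move. *)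

From mathcomp Require Import all_boot all_order all_algebra.
Set Implicit Arguments. Unset Strict Implicit. Unset Printing Implicit Defensive.
Import Order.TTheory GRing.Theory Num.Theory.
Local Open Scope ring_scope.

Section Defs.
Variables (R : realFieldType) (n : nat).

Definition positions (p : 'I_n -> R) : seq R := [seq p j | j <- enum 'I_n].

Definition sortedP (p : 'I_n -> R) : seq R := sort <=%R (positions p).

(* P_k(t) with the paper's 1-based indexing. *)
Definition Pk (p : 'I_n -> R) (k : nat) : R := nth 0 (sortedP p) k.-1.

(* trim^i_{2f}(P): remove, among the 2f smallest positions, those strictly
   smaller than x, and among the 2f largest positions, those strictly
   larger than x. *)
Definition trim2f (f : nat) (p : 'I_n -> R) (x : R) : seq R :=
  let s := sortedP p in
  [seq nth 0 s j | j <- iota 0 n &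
     ~~ (((j < 2 * f)%N) && (nth 0 s j < x)) &&
     ~~ (((n - 2 * f <= j)%N) && (x < nth 0 s j))].

End Defs.

Definition seq_min (R : realFieldType) (s : seq R) : R :=
  foldr Order.min (head 0 s) s.
Definition seq_max (R : realFieldType) (s : seq R) : R :=
  foldr Order.max (head 0 s) s.

Definition range_sub (R : realFieldType) (S T : seq R) : Prop :=
  forall y : R, y \in `[seq_min S, seq_max S] -> y \in `[seq_min T, seq_max T].

(** The trimmed multiset contains the correct position [x_i], so it is
    nonempty.  An element of rank [<= 2f] survives only if it is [>= x_i],
    hence [>= min U]; an element of rank [> 2f] is also [>= min U], because
    only the at most [f] Byzantine positions lie strictly below [min U].
    Symmetrically every survivor is [<= max U]. *)

From Pilot Require Import Defs.
From mathcomp Require Import all_boot all_order all_algebra.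
Import Order.TTheory GRing.Theory Num.Theory.
Local Open Scope ring_scope.

Section SeqExtrema.
Variable R : realFieldType.
Implicit Types (s S T : seq R) (z : R).

Lemma seq_min_le s z : z \in s -> seq_min s <= z.
Proof.
rewrite /seq_min; elim: s (head 0 s) => //= a s IH h.
by rewrite in_cons ge_min => /orP [/eqP -> | /IH ->]; rewrite ?lexx ?orbT.
Qed.

Lemma le_seq_max s z : z \in s -> z <= seq_max s.
Proof.
rewrite /seq_max; elim: s (head 0 s) => //= a s IH h.
by rewrite in_cons le_max => /orP [/eqP -> | /IH ->]; rewrite ?lexx ?orbT.
Qed.

Lemma foldr_sel_mem (op : R -> R -> R) h s :
  (forall a b, op a b = a \/ op a b = b) -> foldr op h s \in h :: s.
Proof.
move=> op_sel; elim: s => [|a s IH] /=; first exact: mem_head.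
rewrite !in_cons; case: (op_sel a (foldr op h s)) => ->; first by rewrite eqxx orbT.
by move: IH; rewrite in_cons => /orP [-> | ->]; rewrite ?orbT.
Qed.

Lemma seq_min_mem s : s != [::] -> seq_min s \in s.
Proof.
case: s => // a s _; have := @foldr_sel_mem Order.min a (a :: s).
rewrite /seq_min /= in_cons => /(_ _)/orP [|/eqP -> | ] //.
- by move=> u v; rewrite /Order.min; case: ifP; [left | right].
- exact: mem_head.
Qed.

Lemma seq_max_mem s : s != [::] -> seq_max s \in s.
Proof.
case: s => // a s _; have := @foldr_sel_mem Order.max a (a :: s).
rewrite /seq_max /= in_cons => /(_ _)/orP [|/eqP -> | ] //.
- by move=> u v; rewrite /Order.max; case: ifP; [right | left].
- exact: mem_head.
Qed.

Lemma range_subP S T :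
  S != [::] -> (forall z, z \in S -> seq_min T <= z <= seq_max T) ->
  range_sub S T.
Proof.
move=> S0 ST y; rewrite !in_itv /= => /andP [minS maxS].
have /ST/andP [minT _] := seq_min_mem _ S0.
have /ST/andP [_ maxT] := seq_max_mem _ S0.
by rewrite (le_trans minT minS) (le_trans maxS maxT).
Qed.

End SeqExtrema.

Section OrderStatistics.
Variable R : realFieldType.
Variable s : seq R.
Hypothesis s_sorted : sorted <=%R s.

Lemma sorted_nth_le {i j} : (i <= j)%N -> (j < size s)%N -> nth 0 s i <= nth 0 s j.
Proof.
move=> ij js; apply: le_sorted_leq_nth => //; rewrite inE //.
exact: leq_ltn_trans js.
Qed.

(* If [s_k < m], then [s_0, ..., s_k] are [k+1] elements below [m]. *)
Lemma count_lt_le_nth (m : R) k :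
  (count (< m) s <= k)%N -> (k < size s)%N -> m <= nth 0 s k.
Proof.
move=> cnt ks; rewrite leNgt; apply/negP => skm.
have all_below : all (< m) (take k.+1 s).
  apply/(all_nthP 0) => l; rewrite size_takel // => lk; rewrite nth_take //.
  exact: le_lt_trans (sorted_nth_le (lk : (l <= k)%N) ks) skm.
have : (k.+1 <= count (< m) s)%N.
  move: all_below; rewrite all_count => /eqP below.
  by rewrite -(cat_take_drop k.+1 s) count_cat below size_takel // leq_addr.
by rewrite ltnNge cnt.
Qed.

Lemma count_gt_nth_le (M : R) k :
  (count (> M) s + k < size s)%N -> nth 0 s k <= M.
Proof.
move=> cnt; have ks : (k < size s)%N := leq_ltn_trans (leq_addl _ _) cnt.
rewrite leNgt; apply/negP => Msk.
have all_above : all (> M) (drop k s).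
  apply/(all_nthP 0) => l; rewrite size_drop => lk; rewrite nth_drop.
  by apply: lt_le_trans Msk (sorted_nth_le (leq_addr _ _) _); rewrite -ltn_subRL.
have : (size s - k <= count (> M) s)%N.
  move: all_above; rewrite all_count => /eqP above.
  by rewrite -[in leqRHS](cat_take_drop k s) count_cat above size_drop leq_addl.
by rewrite leqNgt ltn_subRL addnC cnt.
Qed.

End OrderStatistics.

Section Configuration.
Variables (R : realFieldType) (n : nat) (p : 'I_n -> R).

Lemma sortedP_sorted : sorted <=%R (Defs.sortedP p).
Proof. exact/sort_sorted/le_total. Qed.

Lemma size_sortedP : size (Defs.sortedP p) = n.
Proof. by rewrite size_sort size_map size_enum_ord. Qed.

Lemma mem_sortedP j : p j \in Defs.sortedP p.
Proof. by rewrite mem_sort map_f ?mem_enum. Qed.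

Lemma count_sortedP (a : pred R) : count a (Defs.sortedP p) = #|[pred j | a (p j)]|.
Proof.
rewrite (permP (permEl (perm_sort _ _))) count_map cardE -size_filter.
by rewrite {2}/enum_mem -enumT.
Qed.

Lemma count_sortedP_le_card (a : pred R) (B : {set 'I_n}) :
  (forall j, a (p j) -> j \in B) -> (count a (Defs.sortedP p) <= #|B|)%N.
Proof. by move=> aB; rewrite count_sortedP; apply/subset_leq_card/subsetP. Qed.

Variables (f : nat) (x : R).

Lemma mem_trim2f_self : x \in Defs.sortedP p -> x \in trim2f f p x.
Proof.
move=> xs; have xn : (index x (Defs.sortedP p) < n)%N.
  by rewrite -[X in (_ < X)%N]size_sortedP index_mem.
apply/mapP; exists (index x (Defs.sortedP p)); last by rewrite nth_index.
by rewrite mem_filter mem_iota add0n xn nth_index // ltxx !andbF.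
Qed.

(* A kept element among the [2f] smallest is [>= x], one among the [2f]
   largest is [<= x]; any other element has rank in [(2f, n-2f]]. *)
Lemma trim2f_bounded (lo hi : R) :
  lo <= x <= hi ->
  (forall j, (2 * f <= j < n)%N -> lo <= nth 0 (Defs.sortedP p) j) ->
  (forall j, (j < n - 2 * f)%N -> nth 0 (Defs.sortedP p) j <= hi) ->
  forall z, z \in trim2f f p x -> lo <= z <= hi.
Proof.
move=> /andP [lox xhi] lo_mid hi_mid z /mapP [j].
rewrite mem_filter mem_iota add0n => /andP [/andP [low_kept high_kept] jn] ->.
apply/andP; split.
  case: (ltnP j (2 * f)) low_kept => /= [_ | fj _]; last by rewrite lo_mid ?fj.
  by rewrite -leNgt; apply: le_trans.
case: (leqP (n - 2 * f) j) high_kept => /= [_ | jf _]; last exact: hi_mid.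
by rewrite -leNgt => /le_trans->.
Qed.

End Configuration.

Theorem lemma6 (R : realFieldType) (n f : nat) (B : {set 'I_n})
    (pos : R -> 'I_n -> R) :
  (5 * f < n)%N -> (#|B| <= f)%N ->
  forall (i : 'I_n) (t : R), i \notin B ->
    range_sub (trim2f f (pos t) (pos t i))
              [seq pos t j | j <- enum (~: B)].
Proof.
move=> _ Bf i t iB; set p := pos t; set U := [seq p j | j <- enum (~: B)].
have in_range j : j \notin B -> seq_min U <= p j <= seq_max U.
  move=> jB; have jU : p j \in U by rewrite map_f // mem_enum in_setC.
  by rewrite seq_min_le ?le_seq_max.
have few_below : (count (< seq_min U) (Defs.sortedP p) <= f)%N.
  apply: leq_trans Bf; apply: count_sortedP_le_card => j /=.
  by apply: contraLR => /in_range/andP [+ _]; rewrite leNgt.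
have few_above : (count (> seq_max U) (Defs.sortedP p) <= f)%N.
  apply: leq_trans Bf; apply: count_sortedP_le_card => j /=.
  by apply: contraLR => /in_range/andP [_]; rewrite leNgt.
have i_kept : p i \in trim2f f p (p i) by rewrite mem_trim2f_self ?mem_sortedP.
apply: range_subP; first by apply: contraTneq i_kept => ->.
apply: trim2f_bounded; first exact: in_range.
- move=> j /andP [fj jn]; apply: count_lt_le_nth; rewrite ?size_sortedP //.
    exact: sortedP_sorted.
  by apply: leq_trans few_below (leq_trans _ fj); rewrite leq_pmull.
- move=> j jf; apply: count_gt_nth_le; first exact: sortedP_sorted.
  rewrite size_sortedP; apply: leq_ltn_trans (leq_add few_above (leqnn j)) _.
  by apply: leq_ltn_trans (_ : f + j <= 2 * f + j)%N _;
    rewrite ?leq_add2r ?leq_pmull // -ltn_subRL.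
Qed.
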